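(* Let $0\leq \beta<1$ and $m \in \mathbb{N}$. Let $f(z)=z+\sum_{k=1}^{\infty} a_{mk+1}z^{mk+1}$ belong to $\Theta_{\Sigma_m}(1,1,0,0;\beta)$ (the case $\tau=\lambda=1$, $\gamma=\delta=0$). Then $$|a_{m+1}| \leq \min\left\{\frac{2(1-\beta)}{1+m},\ 2\sqrt{\frac{1-\beta}{(m+1)(1+2m)}}\right\}\quad\text{and}\quad |a_{2m+1}| \leq \frac{2(1-\beta)}{1+2m}.$$
   Context: Let $\mathbb{U}=\{z\in\mathbb{C}:|z|<1\}$ and $m\in\mathbb{N}$. $\mathcal{A}_m$ denotes the class of functions analytic in $\mathbb{U}$ of the form $f(z)=z+\sum_{k=1}^{\infty}a_{mk+1}z^{mk+1}$. $\Sigma_m$ denotes the class of $m$-fold symmetric bi-univalent functions: functions $f\in\mathcal{A}_m$ univalent in $\mathbb{U}$ whose inverse $f^{-1}$ extends to a univalent function $g$ on $\mathbb{U}$; this $g$ has the expansion $g(w)=w-a_{m+1}w^{m+1}+\left[(m+1)a_{m+1}^2-a_{2m+1}\right]w^{2m+1}-\cdots$. For $\delta\in\mathbb{N}_0$ and $h(z)=z+\sum_{k\ge1}c_{mk+1}z^{mk+1}$ analytic in $\mathbb{U}$, the $m$-fold Ruscheweyh derivative is $\mathcal{R}^\delta h(z)=z+\sum_{k=1}^{\infty}\frac{\Gamma(\delta+k+1)}{\Gamma(k+1)\Gamma(\delta+1)}c_{mk+1}z^{mk+1}$ (for $\delta=0$ it is the identity). For such $h$ and parameters $\lambda,\gamma,\tau\neq0,\delta$,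 put $$J_h(z)=1+\frac{1}{\tau}\Big[(1-\lambda)(1-\gamma)\frac{\mathcal{R}^\delta h(z)}{z}+(\lambda(\gamma+1)+\gamma)(\mathcal{R}^\delta h)'(z)+\lambda\gamma\big(z(\mathcal{R}^\delta h)''(z)-2\big)-1\Big].$$ For $0\le\beta<1$, $\Theta_{\Sigma_m}(\tau,\lambda,\gamma,\delta;\beta)$ is the set of $f\in\Sigma_m$ such that $\operatorname{Re}J_f(z)>\beta$ for all $z\in\mathbb{U}$ and $\operatorname{Re}J_g(w)>\beta$ for all $w\in\mathbb{U}$, where $g$ is the extension of $f^{-1}$ to $\mathbb{U}$. *)

From Stdlib Require Import Reals Arith Factorial.
From Coquelicot Require Import Coquelicot.

Open Scope R_scope.

Definition in_U (z : C) : Prop := Cmod z < 1.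

(* Total sum of a complex series (real and imaginary parts summed separately);
   it is the genuine sum whenever the series converges. *)
Definition CSeries (u : nat -> C) : C :=
  (Series (fun n => fst (u n)), Series (fun n => snd (u n))).

Definition has_expansion (h : C -> C) (c : nat -> C) : Prop :=
  forall z : C, in_U z -> is_series (fun n => (c n * z ^ n)%C) (h z).

Definition mfold_coeffs (m : nat) (c : nat -> C) : Prop :=
  c 1%nat = 1%C /\ forall n : nat, (forall k : nat, n <> (m * k + 1)%nat) -> c n = 0%C.

Definition in_A (m : nat) (h : C -> C) (c : nat -> C) : Prop :=
  mfold_coeffs m c /\ has_expansion h c.

Definition univalent_U (h : C -> C) : Prop :=
  forall z1 z2 : C, in_U z1 -> in_U z2 -> h z1 = h z2 -> z1 = z2.

Definition inverse_near0 (f g : C -> C) : Prop :=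
  exists r : R, 0 < r /\ forall w : C, Cmod w < r -> in_U (g w) /\ f (g w) = w.

(* m-fold Ruscheweyh multiplier Gamma(delta+k+1)/(Gamma(k+1)Gamma(delta+1))
   on the coefficient of index n = m k + 1. *)
Definition rusch_mult (m delta n : nat) : R :=
  let k := ((n - 1) / m)%nat in
  INR (fact (delta + k)) / (INR (fact k) * INR (fact delta)).

Definition rusch_coeffs (m delta : nat) (c : nat -> C) (n : nat) : C :=
  (RtoC (rusch_mult m delta n) * c n)%C.

(* J_h(z), with R^delta h(z)/z, (R^delta h)'(z) and z (R^delta h)''(z)
   computed as the (termwise) power series of R^delta h. *)
Definition J (m : nat) (tau lambda gamma : C) (delta : nat) (c : nat -> C) (z : C) : C :=
  let d := rusch_coeffs m delta c in
  let S0 := CSeries (fun n => d n * z ^ (n - 1))%C in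
  let S1 := CSeries (fun n => INR n * d n * z ^ (n - 1))%C in
  let S2 := CSeries (fun n => INR n * INR (n - 1) * d n * z ^ (n - 1))%C in
  (1 + / tau * ((1 - lambda) * (1 - gamma) * S0
                + (lambda * (gamma + 1) + gamma) * S1
                + lambda * gamma * (S2 - 2) - 1))%C.

(* f (with coefficients a) belongs to Theta_{Sigma_m}(tau,lambda,gamma,delta;beta):
   f in Sigma_m (f in A_m, univalent in U, f^{-1} extends to a univalent
   analytic g on U, given by its power series b), Re J_f > beta and Re J_g > beta. *)
Definition Theta (m : nat) (tau lambda gamma : C) (delta : nat) (beta : R)
    (f : C -> C) (a : nat -> C) : Prop :=
  in_A m f a /\ univalent_U f /\
  (forall z, in_U z -> beta < Re (J m tau lambda gamma delta a z)) /\
  exists (g : C -> C) (b : nat -> C),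
    has_expansion g b /\ univalent_U g /\ inverse_near0 f g /\
    (forall w, in_U w -> beta < Re (J m tau lambda gamma delta b w)).

(* With tau = lambda = 1 and gamma = delta = 0 the functional J_h is just h', so Re f' > beta
   and Re g' > beta on the disc.  A Caratheodory-type estimate then gives
   |n c_n| <= 2 (1 - beta) for n >= 2 (recall c_1 = 1), both for the coefficients
   c = a of f and c = b of g.
   It is proved by averaging Re h'(z_j) - beta >= 0 over the points z_j = r e^(2 pi i j/(N+1))
   against the weights 1 - cos(n theta_j + psi): orthogonality of the trigonometric sums
   isolates the n-th coefficient up to aliased terms of order >= N + 1 - n, which vanish as
   N -> oo, and then r -> 1.
   Comparing f (g t) = t for small real t up to O(t^(2m+2)), and using uniqueness of
   power series coefficients, gives b_(2m+1) = (m+1) a_(m+1)^2 - a_(2m+1).  Hence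
   (2m+1)(m+1) |a_(m+1)|^2 <= (2m+1) (|b_(2m+1)| + |a_(2m+1)|) <= 4 (1 - beta). *)

From Stdlib Require Import Reals Factorial.
From Coquelicot Require Import Coquelicot.
From Stdlib Require Import Lra Lia Psatz.

Open Scope R_scope.

Lemma is_series_unique_gen {K : AbsRing} {V : NormedModule K} (u : nat -> V) s1 s2 :
  is_series u s1 -> is_series u s2 -> s1 = s2.
Proof. exact (filterlim_locally_unique _ s1 s2). Qed.

Lemma norm_is_series_le {K : AbsRing} {V : NormedModule K} (u : nat -> V) s (v : nat -> R) l :
  is_series u s -> (forall k, norm (u k) <= v k) -> is_series v l -> norm s <= l.
Proof.
  intros Hu Hb Hv. change (Rbar_le (norm s) l).
  apply (filterlim_le (F := eventually) (fun N => norm (sum_n u N)) (sum_n v)).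
  - exists O. intros N _. unfold sum_n.
    eapply Rle_trans; [apply norm_sum_n_m | apply sum_n_m_le; exact Hb].
  - exact (filterlim_comp _ _ _ (sum_n u) norm _ _ _ Hu (filterlim_norm s)).
  - exact Hv.
Qed.

Lemma series_terms_bounded {K : AbsRing} {V : NormedModule K} (u : nat -> V) s :
  is_series u s -> exists B, 0 <= B /\ forall k, norm (u k) <= B.
Proof.
  intros Hu. destruct (filterlim_bounded (sum_n u) (ex_intro _ s Hu)) as [M HM].
  assert (HM0 : 0 <= M) by (eapply Rle_trans; [apply (norm_ge_0 (sum_n u O)) | apply (HM O)]).
  exists (2 * M). split; [lra |]. intros [|k].
  - specialize (HM O). rewrite sum_O in HM. lra.
  - replace (u (S k)) with (plus (sum_n u (S k)) (opp (sum_n u k))).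
    + eapply Rle_trans; [apply norm_triangle |]. rewrite norm_opp.
      pose proof (HM (S k)). pose proof (HM k). lra.
    + rewrite sum_Sn, plus_comm, plus_assoc. rewrite (plus_opp_l (G := V)), plus_zero_l. reflexivity.
Qed.

Definition single {G : AbelianMonoid} (i : nat) (v : G) (k : nat) : G :=
  if Nat.eqb k i then v else zero.

Lemma is_series_single {K : AbsRing} {V : NormedModule K} (i : nat) (v : V) :
  is_series (single i v) v.
Proof.
  apply filterlim_ext_loc with (fun _ => v); [| apply filterlim_const].
  exists i. intros N HN. induction N.
  - assert (i = O) by lia. subst. rewrite sum_O. reflexivity.
  - rewrite sum_Sn. unfold single at 2. destruct (Nat.eqb_spec (S N) i).
    + subst. rewrite (sum_n_ext_loc _ (fun _ => zero)); [| intros k Hk; unfold single;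
        destruct (Nat.eqb_spec k (S N)); [lia | reflexivity]].
      unfold sum_n. rewrite sum_n_m_const_zero, plus_zero_l. reflexivity.
    + rewrite plus_zero_r. apply IHN. lia.
Qed.

Definition conv_on_01 (c : nat -> C) : Prop :=
  forall x : R, 0 < x < 1 -> ex_series (fun k => (c k * RtoC x ^ k)%C).

Lemma Cmod_mul_pow_R (c : C) (x : R) k : 0 <= x -> Cmod (c * RtoC x ^ k)%C = Cmod c * x ^ k.
Proof. intros Hx. rewrite Cmod_mult, Cmod_pow, Cmod_R, Rabs_pos_eq; auto. Qed.

Lemma conv_coef_bounded c rho : conv_on_01 c -> 0 < rho < 1 ->
  exists B, 0 <= B /\ forall k, Cmod (c k) * rho ^ k <= B.
Proof.
  intros Hc Hrho. destruct (Hc rho Hrho) as [s Hs].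
  destruct (series_terms_bounded _ _ Hs) as [B [HB0 HB]].
  exists B. split; [exact HB0 |]. intros k.
  rewrite <- Cmod_mul_pow_R by lra. exact (HB k).
Qed.

Lemma conv_coef_geometric c r : conv_on_01 c -> 0 <= r < 1 ->
  exists C0 q, 0 <= C0 /\ 0 <= q < 1 /\ forall k, Cmod (c k) * r ^ k <= C0 * q ^ k.
Proof.
  intros Hc Hr. set (rho := (1 + r) / 2).
  destruct (conv_coef_bounded c rho Hc ltac:(unfold rho; lra)) as [B [HB0 HB]].
  exists B, (r / rho). split; [exact HB0 |]. split.
  - unfold rho. split; [apply Rdiv_le_0_compat; lra |].
    apply Rmult_lt_reg_r with ((1 + r) / 2); [lra |]. field_simplify; lra.
  - intros k. replace (r ^ k) with (rho ^ k * (r / rho) ^ k)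
      by (rewrite <- Rpow_mult_distr; f_equal; unfold rho; field; lra).
    rewrite <- Rmult_assoc. apply Rmult_le_compat_r; [| apply HB].
    apply pow_le. unfold rho. apply Rdiv_le_0_compat; lra.
Qed.

Lemma pow_le_one x k : 0 <= x <= 1 -> x ^ k <= 1.
Proof. intros Hx. rewrite <- (pow1 k). apply pow_incr. exact Hx. Qed.

Lemma INR_S_mul_pow_le x k : 0 <= x < 1 -> INR (S k) * x ^ k * (1 - x) <= 1 - x ^ S k.
Proof.
  intros Hx. induction k.
  - simpl. lra.
  - rewrite S_INR. simpl pow. simpl pow in IHk.
    assert (0 <= x ^ k) by (apply pow_le; lra).
    assert (x ^ k <= 1) by (apply pow_le_one; lra).
    assert (x * x ^ k <= 1) by nra.
    assert (x * (INR (S k) * x ^ k * (1 - x)) <= x * (1 - x * x ^ k)) by (apply Rmult_le_compat_l; lra).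
    nra.
Qed.

Lemma conv_deriv c : conv_on_01 c -> conv_on_01 (fun k => RtoC (INR (S k)) * c (S k))%C.
Proof.
  intros Hc x Hx. set (rho := (1 + x) / 2).
  destruct (conv_coef_bounded c rho Hc ltac:(unfold rho; lra)) as [B [HB0 HB]].
  set (p := sqrt (x / rho)).
  assert (Hy : 0 < x / rho < 1).
  { unfold rho. split; [apply Rdiv_lt_0_compat; lra |].
    apply Rmult_lt_reg_r with ((1 + x) / 2); [lra |]. field_simplify; lra. }
  assert (Hp : 0 < p < 1).
  { unfold p. split; [apply sqrt_lt_R0; lra |]. rewrite <- sqrt_1. apply sqrt_lt_1_alt. lra. }
  assert (Hpp : p * p = x / rho) by (apply sqrt_sqrt; lra).
  apply (ex_series_le (V := C_CompleteNormedModule) _ (fun k => B / (rho * (1 - p)) * p ^ k)).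
  - intros k. change (Cmod ((INR (S k) * c (S k)) * x ^ k)%C <= B / (rho * (1 - p)) * p ^ k).
    rewrite Cmod_mul_pow_R, Cmod_mult, Cmod_R, Rabs_pos_eq by (try apply pos_INR; lra).
    specialize (HB (S k)). pose proof (INR_S_mul_pow_le p k ltac:(lra)) as Hkp.
    assert (Hxk : x ^ k = rho ^ k * (p ^ k * p ^ k))
      by (rewrite <- !Rpow_mult_distr, Hpp; f_equal; unfold rho; field; lra).
    assert (0 <= p ^ k) by (apply pow_le; lra).
    assert (0 <= p ^ S k) by (apply pow_le; lra).
    assert (Hrho : 0 < rho) by (unfold rho; lra).
    assert (HC : Cmod (c (S k)) * rho ^ k <= B / rho).
    { apply Rmult_le_reg_r with rho; [lra |]. replace (B / rho * rho) with B by (field; lra).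
      simpl pow in HB. lra. }
    assert (HK : INR (S k) * p ^ k <= 1 / (1 - p)).
    { apply Rmult_le_reg_r with (1 - p); [lra |].
      replace (1 / (1 - p) * (1 - p)) with 1 by (field; lra). lra. }
    rewrite Hxk.
    replace (INR (S k) * Cmod (c (S k)) * (rho ^ k * (p ^ k * p ^ k)))
      with ((Cmod (c (S k)) * rho ^ k) * (INR (S k) * p ^ k) * p ^ k) by ring.
    replace (B / (rho * (1 - p)) * p ^ k) with (B / rho * (1 / (1 - p)) * p ^ k) by (field; lra).
    apply Rmult_le_compat_r; [lra |].
    apply Rmult_le_compat; [| pose proof (pos_INR (S k)); nra | exact HC | exact HK].
    apply Rmult_le_pos; [apply Cmod_ge_0 | apply pow_le; lra].
  - apply (ex_series_scal_l (V := R_NormedModule)). apply ex_series_geom. rewrite Rabs_pos_eq; lra.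
Qed.

(** * A Caratheodory coefficient bound *)

Lemma le_of_le_plus_geom x K A p k0 : 0 <= p < 1 ->
  (forall k, (k0 <= k)%nat -> x <= K + A * p ^ k) -> x <= K.
Proof.
  intros Hp H. replace K with (K + A * 0) by ring. change (Rbar_le x (K + A * 0)).
  apply (is_lim_seq_le_loc (fun _ => x) (fun k => K + A * p ^ k)).
  - exists k0. exact H.
  - apply is_lim_seq_const.
  - apply is_lim_seq_plus'; [apply is_lim_seq_const |].
    apply (is_lim_seq_scal_l _ A 0). apply is_lim_seq_geom. rewrite Rabs_pos_eq; lra.
Qed.

Lemma le_0_of_le_mul_small x A d : 0 < d -> (forall t, 0 < t < d -> x <= A * t) -> x <= 0.
Proof.
  intros Hd H. apply (le_of_le_plus_geom x 0 (A * (d / 2)) (1 / 2) 0); [lra |].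
  intros k _. assert (0 < (1 / 2) ^ k <= 1) by (split; [apply pow_lt | apply pow_le_one]; lra).
  replace (0 + A * (d / 2) * (1 / 2) ^ k) with (A * (d / 2 * (1 / 2) ^ k)) by ring.
  apply H. nra.
Qed.

Lemma one_minus_mul_le_pow h n : 0 <= h <= 1 -> 1 - INR n * h <= (1 - h) ^ n.
Proof.
  intros Hh. induction n.
  - simpl. lra.
  - rewrite S_INR. simpl pow.
    assert ((1 - h) * (1 - INR n * h) <= (1 - h) * (1 - h) ^ n) by (apply Rmult_le_compat_l; lra).
    assert (0 <= INR n * h * h) by (pose proof (pos_INR n); assert (0 <= h * h) by nra; nra).
    nra.
Qed.

Lemma le_of_forall_mul_pow_le x K n : 0 <= x -> (forall r, 0 < r < 1 -> x * r ^ n <= K) -> x <= K.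
Proof.
  intros Hx H. enough (x - K <= 0) by lra.
  apply (le_0_of_le_mul_small _ (x * INR n) 1); [lra |]. intros h Hh.
  pose proof (H (1 - h) ltac:(lra)). pose proof (one_minus_mul_le_pow h n ltac:(lra)).
  assert (x * (1 - INR n * h) <= x * (1 - h) ^ n) by (apply Rmult_le_compat_l; lra).
  nra.
Qed.

Lemma sum_n_telescope (g : nat -> R) N : sum_n (fun j => g (S j) - g j) N = g (S N) - g O.
Proof.
  induction N.
  - rewrite sum_O. reflexivity.
  - rewrite sum_Sn, IHN. change (g (S N) - g O + (g (S (S N)) - g (S N)) = g (S (S N)) - g O). ring.
Qed.

Lemma sum_n_Rmult_l (a : R) (u : nat -> R) N : sum_n (fun k => a * u k) N = a * sum_n u N.
Proof. exact (sum_n_mult_l (K := R_Ring) a u N). Qed.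

Lemma sum_n_Rplus (u v : nat -> R) N : sum_n (fun k => u k + v k) N = sum_n u N + sum_n v N.
Proof. exact (sum_n_plus u v N). Qed.

Lemma Rabs_sum_n_le (f : nat -> R) B N : (forall j, Rabs (f j) <= B) -> Rabs (sum_n f N) <= INR (S N) * B.
Proof.
  intros H. change (norm (sum_n_m f 0 N) <= INR (S N) * B).
  eapply Rle_trans; [apply (norm_sum_n_m (V := R_NormedModule)) |].
  eapply Rle_trans; [apply (sum_n_m_le _ (fun _ => B)); exact H |].
  rewrite sum_n_m_const, Nat.sub_0_r. lra.
Qed.

Lemma sum_n_nonneg (f : nat -> R) N : (forall j, 0 <= f j) -> 0 <= sum_n f N.
Proof.
  intros H. replace 0 with (sum_n (fun _ => 0) N) by (rewrite sum_n_const, Rmult_0_r; reflexivity).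
  apply (sum_n_m_le (fun _ => 0) f). exact H.
Qed.

Lemma sum_n_cos_sin_mul x N p : sin (x / 2) <> 0 -> INR (S N) * x = 2 * INR p * PI ->
  sum_n (fun j => cos (INR j * x)) N = 0 /\ sum_n (fun j => sin (INR j * x)) N = 0.
Proof.
  intros Hs Hx.
  assert (Hend : INR (S N) * x - x / 2 = - (x / 2) + 2 * INR p * PI) by lra.
  assert (Hstart : INR 0 * x - x / 2 = - (x / 2)) by (simpl; lra).
  split.
  - (* 2 sin(x/2) cos(jx) = sin((j+1)x - x/2) - sin(jx - x/2) telescopes *)
    pose proof (sum_n_telescope (fun j => sin (INR j * x - x / 2)) N) as E. cbv beta in E.
    rewrite Hend, Hstart, sin_period, Rminus_diag in E.
    rewrite (sum_n_ext _ (fun j => 2 * sin (x / 2) * cos (INR j * x))) in E.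
    + rewrite sum_n_Rmult_l in E. apply Rmult_integral in E. destruct E; [lra | assumption].
    + intros j. rewrite S_INR. replace ((INR j + 1) * x - x / 2) with (INR j * x + x / 2) by field.
      rewrite sin_plus, sin_minus. simpl. ring.
  - pose proof (sum_n_telescope (fun j => cos (INR j * x - x / 2)) N) as E. cbv beta in E.
    rewrite Hend, Hstart, cos_period, Rminus_diag in E.
    rewrite (sum_n_ext _ (fun j => - 2 * sin (x / 2) * sin (INR j * x))) in E.
    + rewrite sum_n_Rmult_l in E. apply Rmult_integral in E. destruct E; [lra | assumption].
    + intros j. rewrite S_INR. replace ((INR j + 1) * x - x / 2) with (INR j * x + x / 2) by field.
      rewrite cos_plus, cos_minus. simpl. ring.
Qed.

Lemma sum_n_cos_sin_nodes N p : (0 < p < S N)%nat ->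
  sum_n (fun j => cos (INR p * (INR j * (2 * PI / INR (S N))))) N = 0 /\
  sum_n (fun j => sin (INR p * (INR j * (2 * PI / INR (S N))))) N = 0.
Proof.
  intros Hp. pose proof PI_RGT_0.
  assert (HN : 0 < INR (S N)) by (apply lt_0_INR; lia).
  assert (Hpn : INR p < INR (S N)) by (apply lt_INR; lia).
  assert (Hp0 : 0 < INR p) by (apply lt_0_INR; lia).
  set (x := INR p * (2 * PI / INR (S N))).
  assert (Hx : 0 < x / 2 < PI).
  { replace (x / 2) with (PI * (INR p / INR (S N))) by (unfold x; field; lra). split.
    - apply Rmult_lt_0_compat; [lra | apply Rdiv_lt_0_compat; lra].
    - rewrite <- (Rmult_1_r PI) at 2. apply Rmult_lt_compat_l; [lra |].
      apply Rmult_lt_reg_r with (INR (S N)); [lra |]. field_simplify; lra. }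
  destruct (sum_n_cos_sin_mul x N p) as [Hc Hs].
  - pose proof (sin_gt_0 _ (proj1 Hx) (proj2 Hx)). lra.
  - unfold x. field. lra.
  - split; [rewrite <- Hc | rewrite <- Hs]; apply sum_n_ext; intros j; unfold x; f_equal; ring.
Qed.

Lemma sum_n_cos_sin_nodes_diff N k n : k <> n -> (k < n + S N)%nat -> (n < k + S N)%nat ->
  sum_n (fun j => cos ((INR k - INR n) * (INR j * (2 * PI / INR (S N))))) N = 0 /\
  sum_n (fun j => sin ((INR k - INR n) * (INR j * (2 * PI / INR (S N))))) N = 0.
Proof.
  intros Hkn Hk Hn. destruct (Nat.lt_gt_cases k n) as [[L | L] _]; [exact Hkn | |].
  - destruct (sum_n_cos_sin_nodes N (n - k) ltac:(lia)) as [Hc Hs].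
    replace (INR k - INR n) with (- INR (n - k)) by (rewrite minus_INR by lia; ring).
    split.
    + rewrite <- Hc. apply sum_n_ext. intros j. rewrite Ropp_mult_distr_l_reverse, cos_neg. reflexivity.
    + transitivity (-1 * sum_n (fun j => sin (INR (n - k) * (INR j * (2 * PI / INR (S N))))) N);
        [| rewrite Hs; simpl; ring].
      rewrite <- sum_n_Rmult_l. apply sum_n_ext. intros j.
      rewrite Ropp_mult_distr_l_reverse, sin_neg. simpl. ring.
  - replace (INR k - INR n) with (INR (k - n)) by (rewrite minus_INR by lia; ring).
    apply sum_n_cos_sin_nodes. lia.
Qed.

Lemma Cpow_polar r phi k :
  Cpow (r * cos phi, r * sin phi) k = (r ^ k * cos (INR k * phi), r ^ k * sin (INR k * phi)).
Proof.
  induction k.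
  - simpl. rewrite Rmult_0_l, cos_0, sin_0. unfold RtoC. f_equal; ring.
  - simpl Cpow. rewrite IHk, S_INR. unfold Cmult. cbn [fst snd pow].
    replace ((INR k + 1) * phi) with (INR k * phi + phi) by ring.
    rewrite cos_plus, sin_plus. f_equal; ring.
Qed.

Lemma Cmod_polar r phi : 0 <= r -> Cmod (r * cos phi, r * sin phi) = r.
Proof.
  intros Hr. unfold Cmod. simpl.
  replace (r * cos phi * (r * cos phi * 1) + r * sin phi * (r * sin phi * 1)) with (r * r)
    by (pose proof (sin2_cos2 phi); unfold Rsqr in *; nra).
  apply sqrt_square; exact Hr.
Qed.

Lemma exists_unit_dot_Cmod (z : C) : exists c s, c ^ 2 + s ^ 2 = 1 /\ c * Re z + s * Im z = Cmod z.
Proof.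
  destruct (Req_dec (Cmod z) 0) as [E | E].
  - exists 1, 0. split; [ring |]. apply Cmod_eq_0 in E. subst. simpl. rewrite Cmod_0. ring.
  - pose proof (Cmod2_alt z) as H2. exists (Re z / Cmod z), (Im z / Cmod z). split.
    + field_simplify; [| exact E]. rewrite <- H2. field. exact E.
    + field_simplify; [| exact E]. rewrite <- H2. field. exact E.
Qed.

Lemma is_series_sum_n {K : AbsRing} {V : NormedModule K} (F : nat -> nat -> V) (s : nat -> V) N :
  (forall j, is_series (F j) (s j)) -> is_series (fun k => sum_n (fun j => F j k) N) (sum_n s N).
Proof.
  intros H. induction N.
  - rewrite sum_O. eapply is_series_ext; [| apply (H O)]. intros k. rewrite sum_O. reflexivity.
  - rewrite sum_Sn. eapply is_series_ext; [| apply (is_series_plus _ _ _ _ IHN (H (S N)))].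
    intros k. rewrite sum_Sn. reflexivity.
Qed.

Lemma is_series_minus_term_le (t : nat -> R) s i (v : nat -> R) l :
  is_series t s -> (forall k, k <> i -> Rabs (t k) <= v k) -> 0 <= v i -> is_series v l ->
  Rabs (s - t i) <= l.
Proof.
  intros Ht Hb Hi Hv.
  apply (norm_is_series_le (fun k => t k - single i (t i) k) _ v); [| | exact Hv].
  - apply (is_series_minus _ _ _ _ Ht (is_series_single i (t i))).
  - intros k. change (Rabs (t k - single i (t i) k) <= v k). unfold single.
    destruct (Nat.eqb_spec k i).
    + subst. rewrite Rminus_diag, Rabs_R0. exact Hi.
    + change (Rabs (t k - 0) <= v k). rewrite Rminus_0_r. auto.
Qed.

Section Caratheodory.

Variables (e : nat -> C) (beta : R).
Hypothesis e_conv : conv_on_01 e.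
Hypothesis Re_sum_gt : forall z, Cmod z < 1 -> beta < Series (fun k => Re (e k * z ^ k)%C).

Section Nodes.

Variables (r C0 q : R) (N : nat).
Hypotheses (Hr : 0 < r < 1) (HC0 : 0 <= C0) (Hq : 0 <= q < 1)
  (e_geom : forall k, Cmod (e k) * r ^ k <= C0 * q ^ k).

Let th := 2 * PI / INR (S N).

Definition node (j : nat) : C := (r * cos (INR j * th), r * sin (INR j * th)).

Definition node_term (j k : nat) : R := Re (e k * node j ^ k).

Lemma node_term_expand j k : node_term j k =
  Re (e k) * r ^ k * cos (INR k * (INR j * th)) - Im (e k) * r ^ k * sin (INR k * (INR j * th)).
Proof.
  unfold node_term, node. rewrite Cpow_polar. destruct (e k) as [u v]. unfold Re, Im, Cmult. simpl. ring.
Qed.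

Lemma Rabs_node_term_le j k : Rabs (node_term j k) <= C0 * q ^ k.
Proof.
  eapply Rle_trans; [apply re_le_Cmod |].
  unfold node. rewrite Cmod_mult, Cmod_pow, Cmod_polar by lra. apply e_geom.
Qed.

Lemma ex_series_node_term j : ex_series (node_term j).
Proof.
  apply (ex_series_le (V := R_CompleteNormedModule) _ (fun k => C0 * q ^ k)); [apply Rabs_node_term_le |].
  apply (ex_series_scal_l (V := R_NormedModule)). apply ex_series_geom. rewrite Rabs_pos_eq; lra.
Qed.

Lemma Series_node_term_gt j : beta < Series (node_term j).
Proof. apply Re_sum_gt. unfold node. rewrite Cmod_polar; lra. Qed.

Lemma node_sum_approx (w : nat -> R) i M : (forall j, Rabs (w j) <= 1) ->
  (forall k, k <> i -> (k < M)%nat -> sum_n (fun j => node_term j k * w j) N = 0) ->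
  Rabs (sum_n (fun j => Series (node_term j) * w j) N - sum_n (fun j => node_term j i * w j) N)
    <= INR (S N) * C0 * sqrt q ^ M / (1 - sqrt q).
Proof.
  intros Hw Hvanish. set (p := sqrt q).
  assert (Hp : 0 <= p < 1).
  { unfold p. split; [apply sqrt_pos |]. rewrite <- sqrt_1. apply sqrt_lt_1_alt. lra. }
  assert (HpM : 0 <= p ^ M) by (apply pow_le; lra).
  assert (HD : 0 <= INR (S N) * C0) by (apply Rmult_le_pos; [apply pos_INR | exact HC0]).
  apply (is_series_minus_term_le (fun k => sum_n (fun j => node_term j k * w j) N) _ i
           (fun k => INR (S N) * C0 * p ^ M * p ^ k)).
  - apply (is_series_sum_n (fun j k => node_term j k * w j) (fun j => Series (node_term j) * w j)).
    intros j. apply is_series_scal_r. apply Series_correct, ex_series_node_term.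
  - intros k Hk. assert (0 <= p ^ k) by (apply pow_le; lra).
    destruct (Nat.lt_ge_cases k M) as [L | L].
    + rewrite Hvanish, Rabs_R0 by assumption. apply Rmult_le_pos; [apply Rmult_le_pos |]; assumption.
    + eapply Rle_trans.
      * apply Rabs_sum_n_le with (B := C0 * q ^ k). intros j. rewrite Rabs_mult.
        pose proof (Rabs_node_term_le j k). pose proof (Hw j). pose proof (Rabs_pos (node_term j k)).
        pose proof (Rabs_pos (w j)). nra.
      * assert (q ^ k <= p ^ M * p ^ k).
        { replace q with (p * p) by (apply sqrt_sqrt; lra). rewrite Rpow_mult_distr.
          apply Rmult_le_compat_r; [assumption |].
          replace k with (M + (k - M))%nat by lia. rewrite pow_add.
          pose proof (pow_le_one p (k - M) ltac:(lra)). pose proof (pow_le p (k - M) ltac:(lra)). nra. }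
        rewrite !Rmult_assoc. apply Rmult_le_compat_l; [apply pos_INR |]. apply Rmult_le_compat_l; assumption.
  - apply Rmult_le_pos; [apply Rmult_le_pos |]; [assumption | assumption | apply pow_le; lra].
  - replace (INR (S N) * C0 * p ^ M / (1 - p)) with (INR (S N) * C0 * p ^ M * / (1 - p)) by reflexivity.
    apply (is_series_scal_l (V := R_NormedModule)). apply is_series_geom. rewrite Rabs_pos_eq; lra.
Qed.

Lemma sum_node_term_0 : sum_n (fun j => node_term j 0 * 1) N = INR (S N) * Re (e 0%nat).
Proof.
  rewrite (sum_n_ext _ (fun _ => Re (e 0%nat))), sum_n_const; [reflexivity |].
  intros j. rewrite node_term_expand. simpl INR. rewrite !Rmult_0_l, cos_0, sin_0. simpl. ring.
Qed.

Lemma sum_node_term_vanish k : (0 < k < S N)%nat -> sum_n (fun j => node_term j k * 1) N = 0.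
Proof.
  intros Hk. destruct (sum_n_cos_sin_nodes N k Hk) as [Hc Hs]. fold th in Hc, Hs.
  rewrite (sum_n_ext _ (fun j => Re (e k) * r ^ k * cos (INR k * (INR j * th))
                               + (- (Im (e k) * r ^ k)) * sin (INR k * (INR j * th)))).
  - rewrite sum_n_Rplus, !sum_n_Rmult_l, Hc, Hs. simpl. ring.
  - intros j. rewrite node_term_expand. simpl. ring.
Qed.

Variables (n : nat) (c s : R).
Hypotheses (Hn : (1 <= n)%nat) (HnN : (2 * n < S N)%nat) (Hcs : c ^ 2 + s ^ 2 = 1).

Definition weight (j : nat) : R := c * cos (INR n * (INR j * th)) - s * sin (INR n * (INR j * th)).

Lemma Rabs_weight_le j : Rabs (weight j) <= 1.
Proof.
  unfold weight. set (co := cos (INR n * (INR j * th))). set (si := sin (INR n * (INR j * th))).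
  pose proof (sin2_cos2 (INR n * (INR j * th))) as H. fold co si in H. unfold Rsqr in H.
  assert (E : (c * co - s * si) ^ 2 + (c * si + s * co) ^ 2 = (c ^ 2 + s ^ 2) * (si * si + co * co))
    by ring.
  rewrite Hcs, H in E.
  pose proof (pow2_ge_0 (c * si + s * co)).
  apply Rabs_le. set (w := c * co - s * si) in *. split; nra.
Qed.

Lemma sum_weight : sum_n weight N = 0.
Proof.
  destruct (sum_n_cos_sin_nodes N n ltac:(lia)) as [Hc Hs]. fold th in Hc, Hs.
  unfold weight.
  rewrite (sum_n_ext _ (fun j => c * cos (INR n * (INR j * th)) + (- s) * sin (INR n * (INR j * th)))).
  - rewrite sum_n_Rplus, !sum_n_Rmult_l, Hc, Hs. simpl. ring.
  - intros j. simpl. ring.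
Qed.

Lemma sum_node_term_weight k : (sum_n (fun j => node_term j k * weight j) N : R) =
  1 / 2 * ((Re (e k) * c + Im (e k) * s) * r ^ k * sum_n (fun j => cos ((INR k - INR n) * (INR j * th))) N
         + (Re (e k) * s - Im (e k) * c) * r ^ k * sum_n (fun j => sin ((INR k - INR n) * (INR j * th))) N
         + (Re (e k) * c - Im (e k) * s) * r ^ k * sum_n (fun j => cos ((INR k + INR n) * (INR j * th))) N
         - (Re (e k) * s + Im (e k) * c) * r ^ k * sum_n (fun j => sin ((INR k + INR n) * (INR j * th))) N).
Proof.
  rewrite (sum_n_ext _ (fun j =>
      1 / 2 * ((Re (e k) * c + Im (e k) * s) * r ^ k) * cos ((INR k - INR n) * (INR j * th))
    + 1 / 2 * ((Re (e k) * s - Im (e k) * c) * r ^ k) * sin ((INR k - INR n) * (INR j * th))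
    + 1 / 2 * ((Re (e k) * c - Im (e k) * s) * r ^ k) * cos ((INR k + INR n) * (INR j * th))
    + - (1 / 2 * ((Re (e k) * s + Im (e k) * c) * r ^ k)) * sin ((INR k + INR n) * (INR j * th)))).
  - rewrite !sum_n_Rplus, !sum_n_Rmult_l. ring.
  - intros j. rewrite node_term_expand. unfold weight. set (ph := INR j * th).
    replace ((INR k - INR n) * ph) with (INR k * ph - INR n * ph) by ring.
    replace ((INR k + INR n) * ph) with (INR k * ph + INR n * ph) by ring.
    rewrite cos_minus, sin_minus, cos_plus, sin_plus. simpl. field.
Qed.

Lemma sum_node_term_weight_n :
  (sum_n (fun j => node_term j n * weight j) N : R) = INR (S N) / 2 * ((c * Re (e n) + s * Im (e n)) * r ^ n).
Proof.
  destruct (sum_n_cos_sin_nodes N (n + n) ltac:(lia)) as [Hc Hs]. fold th in Hc, Hs.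
  rewrite plus_INR in Hc, Hs. rewrite sum_node_term_weight, Hc, Hs, Rminus_diag.
  rewrite (sum_n_ext _ (fun _ => 1)), (sum_n_ext (fun j => sin (0 * (INR j * th))) (fun _ => 0)).
  rewrite !sum_n_const.
  - field.
  - intros j. rewrite Rmult_0_l. apply sin_0.
  - intros j. rewrite Rmult_0_l. apply cos_0.
Qed.

Lemma sum_node_term_weight_vanish k : k <> n -> (k < S N - n)%nat ->
  (sum_n (fun j => node_term j k * weight j) N : R) = 0.
Proof.
  intros Hkn Hk.
  destruct (sum_n_cos_sin_nodes_diff N k n Hkn ltac:(lia) ltac:(lia)) as [Hc Hs].
  destruct (sum_n_cos_sin_nodes N (k + n) ltac:(lia)) as [Hc' Hs']. rewrite plus_INR in Hc', Hs'.
  fold th in Hc, Hs, Hc', Hs'. rewrite sum_node_term_weight, Hc, Hs, Hc', Hs'. ring.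
Qed.

Lemma rotated_coef_le : (c * Re (e n) + s * Im (e n)) * r ^ n <=
  2 * (Re (e 0%nat) - beta) + 4 * C0 * sqrt q ^ (S N - n) / (1 - sqrt q).
Proof.
  set (M := (S N - n)%nat). set (P := C0 * sqrt q ^ M / (1 - sqrt q)).
  assert (HN : 0 < INR (S N)) by (apply lt_0_INR; lia).
  assert (A0 := node_sum_approx (fun _ => 1) 0 M ltac:(intros; cbv beta; rewrite Rabs_R1; lra)
                  ltac:(intros k Hk HkM; apply sum_node_term_vanish; unfold M in HkM; lia)).
  assert (A1 := node_sum_approx weight n M Rabs_weight_le sum_node_term_weight_vanish).
  cbv beta in A0. rewrite sum_node_term_0 in A0. rewrite sum_node_term_weight_n in A1. fold M in A0, A1.
  assert (Hp1 : 1 - sqrt q <> 0)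
    by (assert (sqrt q < 1) by (rewrite <- sqrt_1; apply sqrt_lt_1_alt; lra); lra).
  replace (INR (S N) * C0 * sqrt q ^ M / (1 - sqrt q)) with (INR (S N) * P) in A0, A1
    by (unfold P; field; exact Hp1).
  assert (Hmean : 0 <= sum_n (fun j => (Series (node_term j) - beta) * (1 - weight j)) N).
  { apply sum_n_nonneg. intros j. apply Rmult_le_pos.
    - pose proof (Series_node_term_gt j). lra.
    - pose proof (Rabs_weight_le j) as Hw. apply Rabs_le_between in Hw. lra. }
  rewrite (sum_n_ext _ (fun j => Series (node_term j) * 1 + (-1) * (Series (node_term j) * weight j)
                               + (- beta) + beta * weight j)) in Hmean
    by (intros; simpl; ring).
  rewrite !sum_n_Rplus, !sum_n_Rmult_l, sum_n_const, sum_weight in Hmean.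
  apply Rabs_le_between in A0. apply Rabs_le_between in A1.
  apply Rmult_le_reg_l with (INR (S N) / 2); [lra |].
  replace (4 * C0 * sqrt q ^ M / (1 - sqrt q)) with (4 * P) by (unfold P; field; exact Hp1).
  lra.
Qed.

End Nodes.

Lemma caratheodory n : (1 <= n)%nat -> Cmod (e n) <= 2 * (Re (e 0%nat) - beta).
Proof.
  intros Hn. apply (le_of_forall_mul_pow_le _ _ n (Cmod_ge_0 _)). intros r Hr.
  destruct (conv_coef_geometric e r e_conv ltac:(lra)) as [C0 [q [HC0 [Hq Hgeom]]]].
  destruct (exists_unit_dot_Cmod (e n)) as [c [s [Hcs Hdot]]].
  assert (Hp : 0 <= sqrt q < 1).
  { split; [apply sqrt_pos |]. rewrite <- sqrt_1. apply sqrt_lt_1_alt. lra. }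
  apply (le_of_le_plus_geom _ _ (4 * C0 / (1 - sqrt q)) (sqrt q) (S n) Hp). intros k Hk.
  rewrite <- Hdot.
  pose proof (rotated_coef_le r C0 q (k + n - 1) Hr HC0 Hq Hgeom n c s Hn ltac:(lia) Hcs) as H.
  replace (S (k + n - 1) - n)%nat with k in H by lia.
  replace (4 * C0 / (1 - sqrt q) * sqrt q ^ k) with (4 * C0 * sqrt q ^ k / (1 - sqrt q)) by (field; lra).
  exact H.
Qed.

End Caratheodory.

(** * Vanishing order of a power series *)

Lemma pseries_small_of_zero_coefs c K : conv_on_01 c -> (forall k, (k < K)%nat -> c k = 0%C) ->
  exists C0, forall z s, Cmod z <= 1 / 4 -> is_series (fun k => (c k * z ^ k)%C) s ->
    Cmod s <= C0 * Cmod z ^ K.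
Proof.
  intros Hc HK. destruct (conv_coef_bounded c (1 / 2) Hc ltac:(lra)) as [B [HB0 HB]].
  exists (2 * B * 4 ^ K). intros z s Hz Hs. set (w := Cmod z).
  assert (Hw : 0 <= w <= 1 / 4) by (split; [apply Cmod_ge_0 | exact Hz]).
  assert (H4 : 0 <= 4 ^ K * w ^ K) by (apply Rmult_le_pos; apply pow_le; lra).
  apply (norm_is_series_le (V := C_NormedModule) (fun k => (c k * z ^ k)%C) s
           (fun k => B * (4 ^ K * w ^ K) * (1 / 2) ^ k)).
  - exact Hs.
  - intros k. change (Cmod (c k * z ^ k)%C <= B * (4 ^ K * w ^ K) * (1 / 2) ^ k).
    assert (0 <= (1 / 2) ^ k) by (apply pow_le; lra).
    destruct (Nat.lt_ge_cases k K) as [L | L].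
    + rewrite HK, Cmult_0_l, Cmod_0 by exact L. apply Rmult_le_pos; [apply Rmult_le_pos |]; assumption.
    + rewrite Cmod_mult, Cmod_pow. fold w. specialize (HB k).
      (* |c_k| w^k = |c_k| (1/2)^k (2w)^k, and (2w)^(K+j) <= (2w)^K (1/2)^j *)
      replace k with (K + (k - K))%nat in * by lia. set (j := (k - K)%nat).
      assert (Hj : (2 * w) ^ j <= (1 / 2) ^ j) by (apply pow_incr; split; lra).
      assert (E : w ^ (K + j) = (1 / 2) ^ (K + j) * ((2 * w) ^ K * (2 * w) ^ j)).
      { rewrite <- pow_add, <- Rpow_mult_distr. f_equal. field. }
      assert (E' : 4 ^ K * w ^ K * (1 / 2) ^ (K + j) = (2 * w) ^ K * (1 / 2) ^ j).
      { rewrite pow_add, <- Rmult_assoc, <- !Rpow_mult_distr.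
        replace (4 * w * (1 / 2)) with (2 * w) by field. reflexivity. }
      rewrite E, Rmult_assoc, E'.
      assert (0 <= (2 * w) ^ K) by (apply pow_le; lra).
      assert (0 <= (2 * w) ^ j) by (apply pow_le; lra).
      assert (0 <= Cmod (c (K + j)%nat) * (1 / 2) ^ (K + j))
        by (apply Rmult_le_pos; [apply Cmod_ge_0 | apply pow_le; lra]).
      rewrite <- Rmult_assoc. apply Rmult_le_compat; [assumption | | assumption |].
      * apply Rmult_le_pos; assumption.
      * apply Rmult_le_compat_l; assumption.
  - replace (2 * B * 4 ^ K * w ^ K) with (B * (4 ^ K * w ^ K) * / (1 - 1 / 2)) by field.
    apply (is_series_scal_l (V := R_NormedModule)). apply is_series_geom. rewrite Rabs_pos_eq; lra.
Qed.

Definition BigO (F : R -> C) (K : nat) : Prop :=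
  exists C0 d, 0 < d /\ forall t, 0 < t < d -> Cmod (F t) <= C0 * t ^ K.

Lemma BigO_nonneg F K : BigO F K ->
  exists C0 d, 0 < d /\ 0 <= C0 /\ forall t, 0 < t < d -> Cmod (F t) <= C0 * t ^ K.
Proof.
  intros [C0 [d [Hd HB]]]. exists (Rabs C0), d. split; [exact Hd |]. split; [apply Rabs_pos |].
  intros t Ht. eapply Rle_trans; [apply HB; exact Ht |].
  apply Rmult_le_compat_r; [apply pow_le; lra | apply Rle_abs].
Qed.

Lemma BigO_eq_near F G K d : 0 < d -> (forall t, 0 < t < d -> F t = G t) -> BigO G K -> BigO F K.
Proof.
  intros Hd HE [C0 [d' [Hd' HB]]]. exists C0, (Rmin d d'). split; [apply Rmin_pos; assumption |].
  intros t Ht. pose proof (Rmin_l d d'). pose proof (Rmin_r d d'). rewrite HE by lra. apply HB. lra.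
Qed.

Lemma BigO_plus F G K : BigO F K -> BigO G K -> BigO (fun t => F t + G t)%C K.
Proof.
  intros [C1 [d1 [Hd1 H1]]] [C2 [d2 [Hd2 H2]]]. exists (C1 + C2), (Rmin d1 d2).
  split; [apply Rmin_pos; assumption |].
  intros t Ht. pose proof (Rmin_l d1 d2). pose proof (Rmin_r d1 d2).
  eapply Rle_trans; [apply Cmod_triangle |]. specialize (H1 t ltac:(lra)). specialize (H2 t ltac:(lra)). lra.
Qed.

Lemma BigO_scal a F K : BigO F K -> BigO (fun t => a * F t)%C K.
Proof.
  intros H. destruct (BigO_nonneg _ _ H) as [C0 [d [Hd [HC HB]]]]. exists (Cmod a * C0), d.
  split; [exact Hd |]. intros t Ht. rewrite Cmod_mult, Rmult_assoc.
  apply Rmult_le_compat_l; [apply Cmod_ge_0 | apply HB; exact Ht].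
Qed.

Lemma BigO_mult F G K1 K2 : BigO F K1 -> BigO G K2 -> BigO (fun t => F t * G t)%C (K1 + K2).
Proof.
  intros H1 H2. destruct (BigO_nonneg _ _ H1) as [C1 [d1 [Hd1 [HC1 B1]]]].
  destruct (BigO_nonneg _ _ H2) as [C2 [d2 [Hd2 [HC2 B2]]]].
  exists (C1 * C2), (Rmin d1 d2). split; [apply Rmin_pos; assumption |].
  intros t Ht. pose proof (Rmin_l d1 d2). pose proof (Rmin_r d1 d2).
  rewrite Cmod_mult, pow_add.
  replace (C1 * C2 * (t ^ K1 * t ^ K2)) with ((C1 * t ^ K1) * (C2 * t ^ K2)) by ring.
  apply Rmult_le_compat; try apply Cmod_ge_0; [apply B1 | apply B2]; lra.
Qed.

Lemma BigO_weaken F K1 K2 : (K2 <= K1)%nat -> BigO F K1 -> BigO F K2.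
Proof.
  intros Hk H. destruct (BigO_nonneg _ _ H) as [C0 [d [Hd [HC HB]]]].
  exists C0, (Rmin d 1). split; [apply Rmin_pos; lra |].
  intros t Ht. pose proof (Rmin_l d 1). pose proof (Rmin_r d 1).
  eapply Rle_trans; [apply HB; lra |]. apply Rmult_le_compat_l; [exact HC |].
  replace K1 with (K2 + (K1 - K2))%nat by lia. rewrite pow_add.
  pose proof (pow_le_one t (K1 - K2) ltac:(lra)). pose proof (pow_le t K1 ltac:(lra)).
  pose proof (pow_le t K2 ltac:(lra)). pose proof (pow_le t (K1 - K2) ltac:(lra)). nra.
Qed.

Lemma BigO_id_pow K : BigO (fun t => RtoC t ^ K)%C K.
Proof.
  exists 1, 1. split; [lra |]. intros t Ht. rewrite Cmod_pow, Cmod_R, Rabs_pos_eq by lra. lra.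
Qed.

Lemma BigO_pow F K j : BigO F K -> BigO (fun t => F t ^ j)%C (K * j).
Proof.
  intros H. induction j as [| j IHj].
  - exists 1, 1. split; [lra |]. intros t Ht. simpl. rewrite Nat.mul_0_r, Cmod_1. simpl. lra.
  - replace (K * S j)%nat with (K + K * j)%nat by lia. apply BigO_mult; assumption.
Qed.

Lemma BigO_dominated F G K A d : 0 < d -> (forall t, 0 < t < d -> Cmod (F t) <= A * Cmod (G t)) ->
  BigO G K -> BigO F K.
Proof.
  intros Hd HA H. destruct (BigO_nonneg _ _ H) as [C0 [d' [Hd' [HC HB]]]].
  exists (Rabs A * C0), (Rmin d d'). split; [apply Rmin_pos; assumption |].
  intros t Ht. pose proof (Rmin_l d d'). pose proof (Rmin_r d d').
  eapply Rle_trans; [apply HA; lra |]. eapply Rle_trans.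
  - apply Rmult_le_compat_r; [apply Cmod_ge_0 | apply Rle_abs].
  - rewrite Rmult_assoc. apply Rmult_le_compat_l; [apply Rabs_pos | apply HB; lra].
Qed.

Lemma BigO_comp (H : C -> C) G K Ch dh : 0 < dh ->
  (forall z, Cmod z <= dh -> Cmod (H z) <= Ch * Cmod z ^ K) -> BigO G 1 -> BigO (fun t => H (G t)) K.
Proof.
  intros Hdh HH HG. destruct (BigO_nonneg _ _ HG) as [Cg [dg [Hdg [HCg HB]]]].
  set (d := Rmin dg (dh / (Cg + 1))).
  assert (Hd : 0 < d) by (apply Rmin_pos; [assumption | apply Rdiv_lt_0_compat; lra]).
  exists (Rabs Ch * Cg ^ K), d. split; [exact Hd |].
  intros t Ht. pose proof (Rmin_l dg (dh / (Cg + 1))) as Hd1. pose proof (Rmin_r dg (dh / (Cg + 1))) as Hd2.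
  fold d in Hd1, Hd2. specialize (HB t ltac:(lra)). rewrite pow_1 in HB.
  assert (Cg * t <= dh).
  { apply Rle_trans with (Cg * (dh / (Cg + 1))); [apply Rmult_le_compat_l; lra |].
    apply Rmult_le_reg_r with (Cg + 1); [lra |].
    replace (Cg * (dh / (Cg + 1)) * (Cg + 1)) with (Cg * dh) by (field; lra). nra. }
  eapply Rle_trans; [apply HH; lra |].
  eapply Rle_trans; [apply Rmult_le_compat_r; [apply pow_le, Cmod_ge_0 | apply Rle_abs] |].
  rewrite Rmult_assoc, <- Rpow_mult_distr. apply Rmult_le_compat_l; [apply Rabs_pos |].
  apply pow_incr. split; [apply Cmod_ge_0 | exact HB].
Qed.

Lemma const_coef_zero_of_BigO (c : nat -> C) (F : R -> C) K :
  (forall t, 0 < t < 1 -> is_series (fun k => (c k * RtoC t ^ k)%C) (F t)) ->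
  BigO F (S K) -> c 0%nat = 0%C.
Proof.
  intros Hs HF. destruct (BigO_nonneg _ _ HF) as [C0 [d [Hd [HC0 HB]]]].
  set (c' := fun k => (c k - single 0 (c 0%nat) k)%C).
  assert (Hs' : forall z s, is_series (fun k => (c k * z ^ k)%C) s ->
                  is_series (fun k => (c' k * z ^ k)%C) (s - c 0%nat)%C).
  { intros z s Hzs.
    eapply is_series_ext; [| apply (is_series_minus _ _ _ _ Hzs (is_series_single 0 (c 0%nat)))].
    intros j. unfold c', single. destruct (Nat.eqb_spec j 0); subst; simpl.
    - change (c 0%nat * 1 - c 0%nat = (c 0%nat - c 0%nat) * 1)%C. ring.
    - change (c j * z ^ j - 0 = (c j - 0) * z ^ j)%C. ring. }
  destruct (pseries_small_of_zero_coefs c' 1) as [C1 HT].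
  { intros x Hx. eexists. exact (Hs' _ _ (Hs x Hx)). }
  { intros j Hj. replace j with O by lia. unfold c', single. simpl. ring. }
  (* |c_0| <= |F t| + |F t - c_0| = O(t^(K+1)) + O(t) *)
  apply Cmod_eq_0, Rle_antisym; [| apply Cmod_ge_0].
  apply (le_0_of_le_mul_small _ (C0 + C1) (Rmin d (1 / 4))); [apply Rmin_pos; lra |].
  intros t Ht. pose proof (Rmin_l d (1 / 4)). pose proof (Rmin_r d (1 / 4)).
  pose proof (HB t ltac:(lra)) as B1.
  pose proof (HT (RtoC t) _ ltac:(rewrite Cmod_R, Rabs_pos_eq; lra) (Hs' _ _ (Hs t ltac:(lra)))) as B2.
  rewrite Cmod_R, Rabs_pos_eq, pow_1 in B2 by lra.
  replace (c 0%nat) with (F t - (F t - c 0%nat))%C by ring.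
  eapply Rle_trans; [apply Cmod_triangle |]. rewrite Cmod_opp.
  assert (t ^ S K <= t).
  { simpl. pose proof (pow_le_one t K ltac:(lra)). pose proof (pow_le t K ltac:(lra)). nra. }
  nra.
Qed.

Lemma is_series_coef_shift (c : nat -> C) (t : R) (s : C) : t <> 0 -> c 0%nat = 0%C ->
  is_series (fun k => (c k * RtoC t ^ k)%C) s -> is_series (fun k => (c (S k) * RtoC t ^ k)%C) (s / RtoC t)%C.
Proof.
  intros Ht c0 Hs.
  assert (Ht0 : RtoC t <> 0%C) by (intros E; apply (f_equal fst) in E; simpl in E; lra).
  assert (E : s = plus s (c 0%nat * RtoC t ^ 0)%C) by (rewrite c0; change (s = s + 0 * 1)%C; ring).
  rewrite E in Hs. apply (is_series_incr_1 (fun k => (c k * RtoC t ^ k)%C)) in Hs.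
  apply (is_series_scal_l (K := C_AbsRing) (V := C_NormedModule) (/ RtoC t)%C) in Hs.
  replace (s / RtoC t)%C with (scal (/ RtoC t)%C s)
    by (change (/ RtoC t * s = s / RtoC t)%C; field; exact Ht0).
  eapply is_series_ext; [| exact Hs].
  intros j. change (/ RtoC t * (c (S j) * RtoC t ^ S j) = c (S j) * RtoC t ^ j)%C. simpl. field. exact Ht0.
Qed.

Lemma BigO_div_id F K : BigO F (S K) -> BigO (fun t => F t / RtoC t)%C K.
Proof.
  intros [C0 [d [Hd HF]]]. exists C0, d. split; [exact Hd |]. intros t Ht.
  assert (Ht0 : RtoC t <> 0%C) by (intros E; apply (f_equal fst) in E; simpl in E; lra).
  rewrite Cmod_div, Cmod_R, Rabs_pos_eq by (exact Ht0 || lra).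
  apply Rmult_le_reg_r with t; [lra |]. replace (Cmod (F t) / t * t) with (Cmod (F t)) by (field; lra).
  specialize (HF t Ht). simpl in HF. lra.
Qed.

Lemma zero_coefs_of_BigO K : forall (c : nat -> C) (F : R -> C),
  (forall t, 0 < t < 1 -> is_series (fun k => (c k * RtoC t ^ k)%C) (F t)) ->
  BigO F K -> forall k, (k < K)%nat -> c k = 0%C.
Proof.
  induction K as [| K IHK]; intros c F Hs HF k Hk; [lia |].
  pose proof (const_coef_zero_of_BigO c F K Hs HF) as c0.
  destruct k as [| k]; [exact c0 |].
  apply (IHK (fun k => c (S k)) (fun t => F t / RtoC t)%C); [| apply BigO_div_id, HF | lia].
  intros t Ht. apply is_series_coef_shift; [lra | exact c0 | exact (Hs t Ht)].
Qed.

Lemma Cpow_sub_linear_step (Y u : C) j :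
  ((Y + u) ^ S j - Y ^ S j - RtoC (INR (S j)) * Y ^ j * u =
   (Y + u) * ((Y + u) ^ j - Y ^ j - RtoC (INR j) * Y ^ (j - 1) * u)
   + RtoC (INR j) * Y ^ (j - 1) * (u * u))%C.
Proof.
  destruct j.
  - simpl. ring.
  - rewrite Nat.sub_succ, Nat.sub_0_r, (S_INR (S j)), RtoC_plus. simpl Cpow. ring.
Qed.

Lemma Cmod_pow_sub_linear_le (Y u : C) (M : R) j : 1 <= M -> Cmod Y <= M -> Cmod (Y + u) <= M ->
  Cmod ((Y + u) ^ j - Y ^ j - RtoC (INR j) * Y ^ (j - 1) * u)%C <= INR j * INR j * M ^ j * Cmod u ^ 2.
Proof.
  intros HM HY HYu. induction j as [| j IHj].
  - simpl. replace (1 - 1 - RtoC 0 * 1 * u)%C with (RtoC 0) by ring. rewrite Cmod_0. lra.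
  - replace (S j - 1)%nat with j by lia. rewrite Cpow_sub_linear_step.
    eapply Rle_trans; [apply Cmod_triangle |].
    rewrite !Cmod_mult, Cmod_R, Rabs_pos_eq, Cmod_pow by apply pos_INR.
    assert (HYj : Cmod Y ^ (j - 1) <= M ^ S j).
    { eapply Rle_trans; [apply pow_incr; split; [apply Cmod_ge_0 | exact HY] |].
      apply Rle_pow; [exact HM | lia]. }
    assert (0 <= Cmod u) by apply Cmod_ge_0.
    assert (0 <= Cmod (Y + u)) by apply Cmod_ge_0.
    pose proof (pos_INR j). assert (0 <= Cmod Y ^ (j - 1)) by (apply pow_le, Cmod_ge_0).
    assert (0 <= M ^ j) by (apply pow_le; lra).
    set (Q := M * M ^ j * Cmod u ^ 2).
    assert (0 <= Q) by (unfold Q; assert (0 <= M * M ^ j) by nra; nra).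
    assert (A1 : Cmod (Y + u) * Cmod ((Y + u) ^ j - Y ^ j - RtoC (INR j) * Y ^ (j - 1) * u)%C
                   <= INR j * INR j * Q).
    { unfold Q. replace (INR j * INR j * (M * M ^ j * Cmod u ^ 2))
        with (M * (INR j * INR j * M ^ j * Cmod u ^ 2)) by ring.
      apply Rmult_le_compat; [assumption | apply Cmod_ge_0 | assumption | exact IHj]. }
    assert (A2 : INR j * Cmod Y ^ (j - 1) * (Cmod u * Cmod u) <= INR j * Q).
    { unfold Q. rewrite Rmult_assoc. apply Rmult_le_compat_l; [assumption |].
      replace (Cmod u ^ 2) with (Cmod u * Cmod u) by ring.
      apply Rmult_le_compat_r; [nra | exact HYj]. }
    rewrite S_INR.
    replace ((INR j + 1) * (INR j + 1) * M ^ S j * Cmod u ^ 2) with ((INR j + 1) * (INR j + 1) * Q)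
      by (unfold Q; simpl; ring).
    nra.
Qed.

(** * Coefficients of the inverse function *)

Lemma in_U_R t : 0 <= t < 1 -> in_U (RtoC t).
Proof. intros Ht. unfold in_U. rewrite Cmod_R, Rabs_pos_eq; lra. Qed.

Lemma conv_of_expansion (h : C -> C) c : has_expansion h c -> conv_on_01 c.
Proof. intros H x Hx. exists (h (RtoC x)). apply H, in_U_R. lra. Qed.

Lemma pseries_at_0 (c : nat -> C) s : is_series (fun k => (c k * RtoC 0 ^ k)%C) s -> s = c 0%nat.
Proof.
  intros H. apply (is_series_unique_gen _ _ _ H).
  eapply is_series_ext; [| apply (is_series_single (V := C_NormedModule) 0 (c 0%nat))].
  intros [| k]; unfold single; simpl.
  - change (c 0%nat = c 0%nat * 1)%C. ring.
  - change (RtoC 0 = c (S k) * (RtoC 0 * RtoC 0 ^ k))%C. ring.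
Qed.

Lemma is_series_coef_minus (c d : nat -> C) z s s' :
  is_series (fun k => (c k * z ^ k)%C) s -> is_series (fun k => (d k * z ^ k)%C) s' ->
  is_series (fun k => ((c k - d k) * z ^ k)%C) (s - s')%C.
Proof.
  intros H1 H2. eapply is_series_ext; [| apply (is_series_minus _ _ _ _ H1 H2)].
  intros k. change (c k * z ^ k + - (d k * z ^ k) = (c k - d k) * z ^ k)%C. ring.
Qed.

Definition mfold_poly_coefs (m : nat) (v1 v2 v3 : C) (k : nat) : C :=
  (single 1 v1 k + single (S m) v2 k + single (S (2 * m)) v3 k)%C.

Lemma is_series_single_pow i (v z : C) : is_series (fun k => (single i v k * z ^ k)%C) (v * z ^ i)%C.
Proof.
  eapply is_series_ext; [| apply (is_series_single (V := C_NormedModule) i (v * z ^ i)%C)].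
  intros k. unfold single. destruct (Nat.eqb_spec k i).
  - subst. reflexivity.
  - change (RtoC 0 = RtoC 0 * z ^ k)%C. ring.
Qed.

Lemma is_series_mfold_poly m v1 v2 v3 z :
  is_series (fun k => (mfold_poly_coefs m v1 v2 v3 k * z ^ k)%C)
            (v1 * z + v2 * z ^ S m + v3 * z ^ S (2 * m))%C.
Proof.
  pose proof (is_series_plus _ _ _ _
    (is_series_plus _ _ _ _ (is_series_single_pow 1 v1 z) (is_series_single_pow (S m) v2 z))
    (is_series_single_pow (S (2 * m)) v3 z)) as H.
  replace (v1 * z + v2 * z ^ S m + v3 * z ^ S (2 * m))%C
    with (plus (plus (v1 * z ^ 1) (v2 * z ^ S m)) (v3 * z ^ S (2 * m)))%C
    by (change ((v1 * z ^ 1 + v2 * z ^ S m) + v3 * z ^ S (2 * m)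
                = v1 * z + v2 * z ^ S m + v3 * z ^ S (2 * m))%C; simpl; ring).
  eapply is_series_ext; [| exact H]. intros k. unfold mfold_poly_coefs.
  change ((single 1 v1 k * z ^ k + single (S m) v2 k * z ^ k) + single (S (2 * m)) v3 k * z ^ k
          = (single 1 v1 k + single (S m) v2 k + single (S (2 * m)) v3 k) * z ^ k)%C. ring.
Qed.

Lemma mfold_poly_coefs_spec m v1 v2 v3 k : (1 <= m)%nat ->
  mfold_poly_coefs m v1 v2 v3 k =
  if Nat.eqb k 1 then v1 else if Nat.eqb k (S m) then v2 else if Nat.eqb k (S (2 * m)) then v3 else 0%C.
Proof.
  intros Hm. unfold mfold_poly_coefs, single.
  destruct (Nat.eqb_spec k 1), (Nat.eqb_spec k (S m)), (Nat.eqb_spec k (S (2 * m))); try lia;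
    change zero with (RtoC 0); ring.
Qed.

Section Inverse_coefficients.

Variables (m : nat) (f g : C -> C) (a b : nat -> C) (r0 : R).
Hypotheses (Hm : (1 <= m)%nat) (a_mfold : mfold_coeffs m a) (f_exp : has_expansion f a)
  (f_univ : univalent_U f) (g_exp : has_expansion g b)
  (Hr0 : 0 < r0) (f_g : forall w, Cmod w < r0 -> in_U (g w) /\ f (g w) = w).

Let alpha := a (S m).
Let alpha' := a (S (2 * m)).

Lemma b_0 : b 0%nat = 0%C.
Proof.
  destruct a_mfold as [_ a_zero].
  assert (f_0 : f (RtoC 0) = RtoC 0).
  { rewrite (pseries_at_0 a (f (RtoC 0))), a_zero; [reflexivity | intros k; lia |].
    apply f_exp, in_U_R. lra. }
  assert (g_0 : g (RtoC 0) = RtoC 0).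
  { destruct (f_g (RtoC 0) ltac:(rewrite Cmod_R, Rabs_R0; lra)) as [Hu Hf].
    apply f_univ; [exact Hu | apply in_U_R; lra | rewrite Hf, f_0; reflexivity]. }
  rewrite <- g_0. symmetry. apply pseries_at_0, g_exp, in_U_R. lra.
Qed.

Definition g_R (t : R) : C := g (RtoC t).

Lemma g_R_BigO : BigO g_R 1.
Proof.
  destruct (pseries_small_of_zero_coefs b 1 (conv_of_expansion g b g_exp)) as [Cg HCg].
  { intros k Hk. replace k with O by lia. exact b_0. }
  exists Cg, (1 / 4). split; [lra |]. intros t Ht.
  pose proof (HCg (RtoC t) (g_R t) ltac:(rewrite Cmod_R, Rabs_pos_eq; lra)
                  (g_exp _ (in_U_R t ltac:(lra)))) as H.
  rewrite Cmod_R, Rabs_pos_eq in H by lra. exact H.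
Qed.

Definition f_tail (z : C) : C := (f z - (1 * z + alpha * z ^ S m + alpha' * z ^ S (2 * m)))%C.

Lemma f_tail_g_R_BigO : BigO (fun t => f_tail (g_R t)) (3 * m + 1).
Proof.
  destruct a_mfold as [a_1 a_zero].
  set (d := fun k => (a k - mfold_poly_coefs m 1 alpha alpha' k)%C).
  assert (Hd : forall z, in_U z -> is_series (fun k => (d k * z ^ k)%C) (f_tail z)).
  { intros z Hz. apply is_series_coef_minus; [apply f_exp, Hz | apply is_series_mfold_poly]. }
  destruct (pseries_small_of_zero_coefs d (3 * m + 1)) as [Cr HCr].
  - intros x Hx. eexists. apply Hd, in_U_R. lra.
  - intros k Hk. unfold d. rewrite mfold_poly_coefs_spec by exact Hm.
    destruct (Nat.eqb_spec k 1); [subst; rewrite a_1; ring |].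
    destruct (Nat.eqb_spec k (S m)); [subst; unfold alpha; ring |].
    destruct (Nat.eqb_spec k (S (2 * m))); [subst; unfold alpha'; ring |].
    rewrite a_zero; [ring |]. intros q Hq. destruct q as [| [| [| q]]]; nia.
  - apply (BigO_comp f_tail g_R _ Cr (1 / 4)); [lra | | exact g_R_BigO].
    intros z Hz. apply HCr; [exact Hz | apply Hd]. unfold in_U. lra.
Qed.

Lemma g_R_fixed_point t : 0 < t < r0 ->
  g_R t = (RtoC t - alpha * g_R t ^ S m - alpha' * g_R t ^ S (2 * m) - f_tail (g_R t))%C.
Proof.
  intros Ht. unfold f_tail, g_R. rewrite (proj2 (f_g (RtoC t) ltac:(rewrite Cmod_R, Rabs_pos_eq; lra))). ring.
Qed.

Definition g_R_dev (t : R) : C := (g_R t - RtoC t)%C.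

Lemma g_R_dev_BigO : BigO g_R_dev (S m).
Proof.
  apply (BigO_eq_near _ (fun t => - alpha * g_R t ^ S m + - alpha' * g_R t ^ S (2 * m)
                                  + - (1) * f_tail (g_R t))%C _ r0 Hr0).
  { intros t Ht. unfold g_R_dev. rewrite g_R_fixed_point at 1 by exact Ht. ring. }
  apply BigO_plus; [apply BigO_plus |]; apply BigO_scal.
  - apply (BigO_weaken _ (1 * S m)); [lia |]. apply BigO_pow, g_R_BigO.
  - apply (BigO_weaken _ (1 * S (2 * m))); [lia |]. apply BigO_pow, g_R_BigO.
  - apply (BigO_weaken _ (3 * m + 1)); [lia |]. exact f_tail_g_R_BigO.
Qed.

Lemma pow_g_R_taylor_BigO j :
  BigO (fun t => g_R t ^ j - RtoC t ^ j - RtoC (INR j) * RtoC t ^ (j - 1) * g_R_dev t)%C (2 * m + 2).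
Proof.
  destruct (BigO_nonneg _ _ g_R_BigO) as [Cg [dg [Hdg [HCg HBg]]]].
  apply (BigO_dominated _ (fun t => g_R_dev t * g_R_dev t)%C _ (INR j * INR j * (1 + Cg) ^ j) (Rmin dg 1)).
  - apply Rmin_pos; lra.
  - intros t Ht. pose proof (Rmin_l dg 1). pose proof (Rmin_r dg 1).
    assert (E : g_R t = (RtoC t + g_R_dev t)%C) by (unfold g_R_dev; ring).
    rewrite E, Cmod_mult.
    replace (Cmod (g_R_dev t) * Cmod (g_R_dev t)) with (Cmod (g_R_dev t) ^ 2) by ring.
    apply Cmod_pow_sub_linear_le.
    + lra.
    + rewrite Cmod_R, Rabs_pos_eq; lra.
    + rewrite <- E. specialize (HBg t ltac:(lra)). rewrite pow_1 in HBg. nra.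
  - replace (2 * m + 2)%nat with (S m + S m)%nat by lia. apply BigO_mult; exact g_R_dev_BigO.
Qed.

Lemma pow_g_R_sub_BigO j K : (K <= 2 * m + 2)%nat -> (K <= j - 1 + S m)%nat ->
  BigO (fun t => g_R t ^ j - RtoC t ^ j)%C K.
Proof.
  intros HK1 HK2.
  apply (BigO_eq_near _ (fun t => (g_R t ^ j - RtoC t ^ j - RtoC (INR j) * RtoC t ^ (j - 1) * g_R_dev t)
                                  + RtoC (INR j) * (RtoC t ^ (j - 1) * g_R_dev t))%C _ 1);
    [lra | intros; ring |].
  apply BigO_plus.
  - apply (BigO_weaken _ (2 * m + 2)); [exact HK1 | apply pow_g_R_taylor_BigO].
  - apply BigO_scal. apply (BigO_weaken _ (j - 1 + S m)); [exact HK2 |].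
    apply BigO_mult; [apply BigO_id_pow | exact g_R_dev_BigO].
Qed.

Lemma g_R_dev_second_order_BigO : BigO (fun t => g_R_dev t + alpha * RtoC t ^ S m)%C (S (S m)).
Proof.
  apply (BigO_eq_near _ (fun t => - alpha * (g_R t ^ S m - RtoC t ^ S m) + - alpha' * g_R t ^ S (2 * m)
                                  + - (1) * f_tail (g_R t))%C _ r0 Hr0).
  { intros t Ht. unfold g_R_dev. rewrite g_R_fixed_point at 1 by exact Ht. ring. }
  apply BigO_plus; [apply BigO_plus |]; apply BigO_scal.
  - apply pow_g_R_sub_BigO; lia.
  - apply (BigO_weaken _ (1 * S (2 * m))); [lia |]. apply BigO_pow, g_R_BigO.
  - apply (BigO_weaken _ (3 * m + 1)); [lia |]. exact f_tail_g_R_BigO.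
Qed.

Let inv_coef := (RtoC (INR (S m)) * alpha * alpha - alpha')%C.

Definition g_R_err (t : R) : C :=
  (g_R t - (1 * RtoC t + - alpha * RtoC t ^ S m + inv_coef * RtoC t ^ S (2 * m)))%C.

Lemma g_R_err_BigO : BigO g_R_err (2 * m + 2).
Proof.
  apply (BigO_eq_near _ (fun t =>
      - alpha * (g_R t ^ S m - RtoC t ^ S m - RtoC (INR (S m)) * RtoC t ^ (S m - 1) * g_R_dev t)
    + - (RtoC (INR (S m)) * alpha) * (RtoC t ^ m * (g_R_dev t + alpha * RtoC t ^ S m))
    + - alpha' * (g_R t ^ S (2 * m) - RtoC t ^ S (2 * m)) + - (1) * f_tail (g_R t))%C _ r0 Hr0).
  { intros t Ht. unfold g_R_err, inv_coef, g_R_dev.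
    replace (S m - 1)%nat with m by lia.
    replace (RtoC t ^ S (2 * m))%C with (RtoC t ^ m * RtoC t ^ S m)%C
      by (rewrite <- Cpow_add_r; f_equal; lia).
    rewrite g_R_fixed_point at 1 by exact Ht. ring. }
  apply BigO_plus; [apply BigO_plus; [apply BigO_plus |] |]; apply BigO_scal.
  - apply pow_g_R_taylor_BigO.
  - replace (2 * m + 2)%nat with (m + S (S m))%nat by lia.
    apply BigO_mult; [apply BigO_id_pow | exact g_R_dev_second_order_BigO].
  - apply pow_g_R_sub_BigO; lia.
  - apply (BigO_weaken _ (3 * m + 1)); [lia |]. exact f_tail_g_R_BigO.
Qed.

Lemma inverse_coefs :
  b 1%nat = 1%C /\ b (S (2 * m)) = (RtoC (INR (S m)) * a (S m) * a (S m) - a (S (2 * m)))%C.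
Proof.
  set (d := fun k => (b k - mfold_poly_coefs m 1 (- alpha) inv_coef k)%C).
  assert (Hd : forall k, (k < 2 * m + 2)%nat -> d k = 0%C).
  { apply (zero_coefs_of_BigO _ d g_R_err); [| exact g_R_err_BigO].
    intros t Ht. apply is_series_coef_minus; [apply g_exp, in_U_R; lra | apply is_series_mfold_poly]. }
  pose proof (Hd 1%nat ltac:(lia)) as H1. pose proof (Hd (S (2 * m)) ltac:(lia)) as H2.
  unfold d in H1, H2. rewrite mfold_poly_coefs_spec in H1, H2 by exact Hm.
  destruct (Nat.eqb_spec 1 1); [| lia].
  destruct (Nat.eqb_spec (S (2 * m)) 1); [lia |]. destruct (Nat.eqb_spec (S (2 * m)) (S m)); [lia |].
  destruct (Nat.eqb_spec (S (2 * m)) (S (2 * m))); [| lia].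
  split.
  - replace (b 1%nat) with ((b 1%nat - 1) + 1)%C by ring. rewrite H1. ring.
  - replace (b (S (2 * m))) with ((b (S (2 * m)) - inv_coef) + inv_coef)%C by ring.
    rewrite H2. unfold inv_coef, alpha, alpha'. ring.
Qed.

End Inverse_coefficients.

Lemma rusch_mult_0 m n : rusch_mult m 0 n = 1.
Proof.
  unfold rusch_mult. cbv zeta. rewrite Nat.add_0_l. change (INR (fact 0)) with 1.
  field. apply INR_fact_neq_0.
Qed.

Lemma Re_J_deriv m c z : Re (J m 1%C 1%C 0%C 0 c z) =
  Series (fun k => Re (RtoC (INR (S k)) * c (S k) * z ^ k)%C).
Proof.
  assert (HJ : forall S0 S1 S2 : C,
    (1 + / 1 * ((1 - 1) * (1 - 0) * S0 + (1 * (0 + 1) + 0) * S1 + 1 * 0 * (S2 - 2) - 1))%C = S1)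
    by (intros; field).
  unfold J. cbv zeta. rewrite HJ. unfold CSeries, Re. cbn [fst].
  rewrite Series_incr_1_aux; [| simpl; ring].
  apply Series_ext. intros k. unfold rusch_coeffs. rewrite rusch_mult_0, Nat.sub_succ, Nat.sub_0_r.
  f_equal. f_equal. ring.
Qed.

Lemma deriv_coef_le m c beta n : conv_on_01 c ->
  (forall z, in_U z -> beta < Re (J m 1%C 1%C 0%C 0 c z)) -> (1 <= n)%nat ->
  INR (S n) * Cmod (c (S n)) <= 2 * (Re (c 1%nat) - beta).
Proof.
  intros Hc HJ Hn.
  pose proof (caratheodory (fun k => RtoC (INR (S k)) * c (S k))%C beta (conv_deriv c Hc)
                ltac:(intros z Hz; cbv beta; rewrite <- (Re_J_deriv m); exact (HJ z Hz)) n Hn) as H.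
  cbv beta in H.
  rewrite Cmod_mult, Cmod_R, Rabs_pos_eq in H by apply pos_INR.
  replace (Re (RtoC (INR 1) * c 1%nat)) with (Re (c 1%nat)) in H by (simpl; unfold Re; simpl; ring).
  exact H.
Qed.

Lemma le_twice_sqrt_div x y k : 0 < k -> 0 <= x -> k * x ^ 2 <= 4 * y -> x <= 2 * sqrt (y / k).
Proof.
  intros Hk Hx H. assert (Hy : 0 <= y / k) by (apply Rdiv_le_0_compat; [nra | exact Hk]).
  replace (2 * sqrt (y / k)) with (sqrt (2 ^ 2 * (y / k)))
    by (rewrite sqrt_mult, sqrt_pow2 by (lra || nra); reflexivity).
  rewrite <- (sqrt_pow2 x Hx). apply sqrt_le_1_alt.
  apply Rmult_le_reg_l with k; [exact Hk |].
  replace (k * (2 ^ 2 * (y / k))) with (4 * y) by (field; lra). exact H.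
Qed.

Lemma Cmod_sq_le_of_inverse_coef m K (a b : nat -> C) :
  b (S (2 * m)) = (RtoC (INR (S m)) * a (S m) * a (S m) - a (S (2 * m)))%C ->
  INR (S (2 * m)) * Cmod (b (S (2 * m))) <= K -> INR (S (2 * m)) * Cmod (a (S (2 * m))) <= K ->
  INR (S (2 * m)) * INR (S m) * Cmod (a (S m)) ^ 2 <= 2 * K.
Proof.
  intros Hb Hbk Hak.
  pose proof (Cmod_triangle (RtoC (INR (S (2 * m))) * b (S (2 * m)))
                            (RtoC (INR (S (2 * m))) * a (S (2 * m)))) as T.
  replace (RtoC (INR (S (2 * m))) * b (S (2 * m)) + RtoC (INR (S (2 * m))) * a (S (2 * m)))%C
    with (RtoC (INR (S (2 * m))) * RtoC (INR (S m)) * (a (S m) * a (S m)))%C in T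
    by (rewrite Hb; ring).
  rewrite !Cmod_mult, !Cmod_R, !Rabs_pos_eq in T by apply pos_INR. lra.
Qed.

Theorem corollary4 (m : nat) (beta : R) (f : C -> C) (a : nat -> C) :
  (1 <= m)%nat -> 0 <= beta < 1 ->
  Theta m 1%C 1%C 0%C 0%nat beta f a ->
  Cmod (a (m + 1)%nat) <=
    Rmin (2 * (1 - beta) / (1 + INR m))
         (2 * sqrt ((1 - beta) / ((INR m + 1) * (1 + 2 * INR m)))) /\
  Cmod (a (2 * m + 1)%nat) <= 2 * (1 - beta) / (1 + 2 * INR m).
Proof.
  intros Hm Hbeta [[a_mfold f_exp] [f_univ [Jf [g [b [g_exp [_ [[r0 [Hr0 f_g]] Jg]]]]]]]].
  destruct (inverse_coefs m f g a b r0 Hm a_mfold f_exp f_univ g_exp Hr0 f_g) as [b_1 b_2m1].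
  pose proof (deriv_coef_le m a beta m (conv_of_expansion f a f_exp) Jf Hm) as Am.
  pose proof (deriv_coef_le m a beta (2 * m) (conv_of_expansion f a f_exp) Jf ltac:(lia)) as A2m.
  pose proof (deriv_coef_le m b beta (2 * m) (conv_of_expansion g b g_exp) Jg ltac:(lia)) as B2m.
  rewrite (proj1 a_mfold) in Am, A2m. rewrite b_1 in B2m. simpl Re in Am, A2m, B2m.
  pose proof (Cmod_sq_le_of_inverse_coef m _ a b b_2m1 B2m A2m) as Hsq.
  replace (m + 1)%nat with (S m) by lia. replace (2 * m + 1)%nat with (S (2 * m)) by lia.
  assert (ISm : INR (S m) = INR m + 1) by apply S_INR.
  assert (IS2m : INR (S (2 * m)) = 1 + 2 * INR m) by (rewrite S_INR, mult_INR; simpl; ring).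
  rewrite ISm in Am, Hsq. rewrite IS2m in A2m, Hsq. pose proof (pos_INR m).
  split; [apply Rmin_glb |].
  - apply Rle_div_r; lra.
  - apply le_twice_sqrt_div; [nra | apply Cmod_ge_0 | lra].
  - apply Rle_div_r; lra.
Qed.
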